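(* Let $R$ be a local Artinian ring which is not a division ring, and let $C=C(R)$ be its center. (1) If $R$ is centrally essential, then $R/J(R)$ is commutative and $C\cap M\neq 0$ for every minimal right ideal $M$ of $R$. (2) If $R/J(R)$ is commutative, $\mathrm{Soc}(R_C)=\mathrm{Soc}(R_R)$, and $C\cap M\neq 0$ for every minimal right ideal $M$ of $R$, then $R$ is centrally essential.
   Context: All rings are associative with non-zero identity. A ring $R$ is centrally essential if for every non-zero $a\in R$ there exist non-zero elements $x,y\in C(R)$ with $ax=y$. A ring is local if $R/J(R)$ is a division ring, where $J(R)$ is the Jacobson radical. $\mathrm{Soc}(R_R)$ is the sum of all minimal right ideals of $R$, and $\mathrm{Soc}(R_C)$ is the sum of all simple $C$-submodules of $R$ regarded as a $C$-module. *)

From mathcomp Require Import all_boot all_algebra.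
Set Implicit Arguments. Unset Strict Implicit. Unset Printing Implicit Defensive.
Import GRing.Theory.
Local Open Scope ring_scope.

Section RingDefs.
Variable R : nzRingType.

Definition central (c : R) : Prop := forall r : R, c * r = r * c.

Definition is_unit (x : R) : Prop := exists y : R, x * y = 1 /\ y * x = 1.

Definition division_ring : Prop := forall x : R, x <> 0 -> is_unit x.

Definition add_subgroup (I : R -> Prop) : Prop :=
  I 0 /\ (forall x y, I x -> I y -> I (x - y)).

Definition right_ideal (I : R -> Prop) : Prop :=
  add_subgroup I /\ (forall x r, I x -> I (x * r)).

Definition subset (I K : R -> Prop) : Prop := forall x, I x -> K x.
Definition same_set (I K : R -> Prop) : Prop := forall x, I x <-> K x.
Definition zero_set (I : R -> Prop) : Prop := forall x, I x -> x = 0.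

Definition maximal_right_ideal (M : R -> Prop) : Prop :=
  right_ideal M /\ ~ M 1 /\
  forall K, right_ideal K -> subset M K -> same_set K M \/ K 1.

Definition jacobson (x : R) : Prop :=
  forall M, maximal_right_ideal M -> M x.

(* R/J(R) is a division ring, written out on representatives:
   the quotient is non-zero and every non-zero class is invertible. *)
Definition local_ring : Prop :=
  ~ jacobson 1 /\
  forall x : R, ~ jacobson x ->
    exists y : R, jacobson (x * y - 1) /\ jacobson (y * x - 1).

Definition comm_mod_jacobson : Prop :=
  forall x y : R, jacobson (x * y - y * x).

Definition right_artinian : Prop :=
  forall I : nat -> R -> Prop,
    (forall n, right_ideal (I n)) ->
    (forall n, subset (I n.+1) (I n)) ->
    exists N, forall n, (N <= n)%N -> same_set (I n) (I N).

Definition minimal_right_ideal (M : R -> Prop) : Prop :=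
  right_ideal M /\ ~ zero_set M /\
  forall K, right_ideal K -> subset K M -> zero_set K \/ same_set K M.

Definition C_submodule (N : R -> Prop) : Prop :=
  add_subgroup N /\ (forall x c, central c -> N x -> N (x * c)).

Definition simple_C_submodule (N : R -> Prop) : Prop :=
  C_submodule N /\ ~ zero_set N /\
  forall K, C_submodule K -> subset K N -> zero_set K \/ same_set K N.

Definition sum_of_family (F : (R -> Prop) -> Prop) (x : R) : Prop :=
  exists s : seq R, (forall a, a \in s -> exists N, F N /\ N a) /\
                    x = \sum_(a <- s) a.

Definition soc_RR : R -> Prop := sum_of_family minimal_right_ideal.
Definition soc_RC : R -> Prop := sum_of_family simple_C_submodule.

Definition centrally_essential : Prop :=
  forall a : R, a <> 0 ->
    exists x y : R, central x /\ central y /\ x <> 0 /\ y <> 0 /\ a * x = y.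

End RingDefs.
Arguments central {R}.
Arguments minimal_right_ideal {R}.
Arguments same_set {R}.
Arguments soc_RC R : clear implicits.
Arguments soc_RR R : clear implicits.

(* In a local ring every element outside J = J(R) is a unit, J is two-sided, and
   M J = 0 for every minimal right ideal M, hence Soc(R_R) J = 0.
   (1) A minimal right ideal contains a non-zero central y = m x, so y J = 0.
   For y w <> 0 central essentiality gives y w u = v with u, v central and
   non-zero; u is then a unit, so y w = v u^-1 is central.  Hence
   y (a b - b a) = 0, which forces a b - b a into J.
   (2) Given a <> 0, the DCC yields central x with a x R minimal among such
   right ideals; then s = a x is killed by the central elements of J, so s C is
   a simple C-module and s lies in Soc(R_C) = Soc(R_R).  Thus s J = 0 and s R is
   a minimal right ideal, which contains a non-zero central c = s r with r a
   unit.  As c J = 0 and R/J is commutative, s = c r^-1 is central. *)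

From Pilot Require Import Defs.
From mathcomp Require Import all_boot all_algebra.
From mathcomp Require classical_sets boolp.
From Stdlib Require Import Classical ClassicalEpsilon.
Set Implicit Arguments. Unset Strict Implicit. Unset Printing Implicit Defensive.
Import GRing.Theory.
Local Open Scope ring_scope.

Section MaximalRightIdeals.
Variable R : nzRingType.
Implicit Types (I K M X : R -> Prop) (r x y : R).

Definition proper_right_ideal_over I X := right_ideal X /\ ~ X 1 /\ Defs.subset I X.

Lemma proper_right_ideal_chain_union I (F : (R -> Prop) -> Prop) :
  (forall X, F X -> X = (fun _ => False) \/ proper_right_ideal_over I X) ->
  (forall X Y, F X -> F Y -> Defs.subset X Y \/ Defs.subset Y X) ->
  (exists X x, F X /\ X x) ->
  proper_right_ideal_over I (fun x => exists2 X, F X & X x).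
Proof.
move=> Fproper Fchain [X0 [x0 [FX0 X0x0]]].
have proper_of_mem X x : F X -> X x -> proper_right_ideal_over I X.
  by move=> FX Xx; case: (Fproper X FX) => // X_0; rewrite X_0 in Xx.
have [[[X00 _] _] [_ IX0]] := proper_of_mem _ _ FX0 X0x0.
split; [split; [split|] | split].
- by exists X0.
- move=> x y [X FX Xx] [Y FY Yy].
  have [XY|YX] := Fchain X Y FX FY.
  + have [[[_ YB] _] _] := proper_of_mem _ _ FY Yy.
    by exists Y => //; apply: YB => //; apply: XY.
  + have [[[_ XB] _] _] := proper_of_mem _ _ FX Xx.
    by exists X => //; apply: XB => //; apply: YX.
- move=> x r [X FX Xx]; have [[_ XM] _] := proper_of_mem _ _ FX Xx.
  by exists X => //; apply: XM.
- by move=> [X FX X1]; have [_ [] ] := proper_of_mem _ _ FX X1.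
- by move=> x Ix; exists X0 => //; apply: IX0.
Qed.

(* Krull's lemma; the empty set joins the Zorn family because the empty chain
   has empty union. *)
Lemma maximal_right_ideal_ext I : right_ideal I -> ~ I 1 ->
  exists M, maximal_right_ideal M /\ Defs.subset I M.
Proof.
move=> idI I1; pose P X := X = (fun _ => False) \/ proper_right_ideal_over I X.
have [A [PA Amax]] : exists A, P A /\ forall B, classical_sets.proper A B -> ~ P B.
  apply: classical_sets.Zorn_bigcup => F FP Fchain.
  have [nonempty|empty] := classic (exists X x, F X /\ X x).
    by right; apply: proper_right_ideal_chain_union.
  left; apply: boolp.funext => x; apply: boolp.propext; split => // -[X FX Xx].
  by apply: empty; exists X, x.
have PI : P I by right; split => //; split.
have [idA [A1 IA]] : proper_right_ideal_over I A.
  case: PA => // A0; exfalso; apply: (Amax I) => //; rewrite A0.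
  by have [[I0 _] _] := idI; split=> [x []|IA]; apply: (IA 0 I0).
exists A; split => //; split => //; split => // K idK AK.
have [K1|K1] := classic (K 1); [by right | left].
move=> x; split; last exact: AK.
move=> Kx; apply: NNPP => Ax; apply: (Amax K).
  by split => // KA; apply/Ax/KA.
by right; split => //; split => // y /IA /AK.
Qed.

End MaximalRightIdeals.

Section Center.
Variable R : nzRingType.
Implicit Types (c d r s : R).

Lemma central0 : central (0 : R).
Proof. by move=> r; rewrite mul0r mulr0. Qed.

Lemma central1 : central (1 : R).
Proof. by move=> r; rewrite mul1r mulr1. Qed.

Lemma centralB c d : central c -> central d -> central (c - d).
Proof. by move=> Cc Cd r; rewrite mulrBl mulrBr Cc Cd. Qed.

Lemma centralM c d : central c -> central d -> central (c * d).
Proof. by move=> Cc Cd r; rewrite -mulrA Cd mulrA Cc mulrA. Qed.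

Lemma central_inv c c' : central c -> c * c' = 1 -> c' * c = 1 -> central c'.
Proof.
move=> Cc cc' c'c r.
transitivity (c' * (r * c) * c'); first by rewrite mulrA -(mulrA _ c) cc' mulr1.
by rewrite -Cc mulrA c'c mul1r.
Qed.

Definition cprincipal s : R -> Prop := fun z => exists c, central c /\ z = s * c.

Lemma cprincipal_id s : cprincipal s s.
Proof. by exists 1; split; [exact: central1 | rewrite mulr1]. Qed.

End Center.

Section Jacobson.
Variable R : nzRingType.
Implicit Types (I M : R -> Prop) (c j r s w x y : R).

Definition rprincipal s : R -> Prop := fun z => exists r, z = s * r.

Lemma right_ideal_rprincipal s : right_ideal (rprincipal s).
Proof.
split; first split.
- by exists 0; rewrite mulr0.
- by move=> _ _ [r1 ->] [r2 ->]; exists (r1 - r2); rewrite mulrBr.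
- by move=> _ r [r1 ->]; exists (r1 * r); rewrite mulrA.
Qed.

Lemma rprincipal_id s : rprincipal s s.
Proof. by exists 1; rewrite mulr1. Qed.

Lemma rprincipalM s r : Defs.subset (rprincipal (s * r)) (rprincipal s).
Proof. by move=> _ [r' ->]; exists (r * r'); rewrite mulrA. Qed.

Lemma not_zero_setP I : ~ zero_set I -> exists x, I x /\ x <> 0.
Proof.
by move=> nz; have [x nx] := not_all_ex_not _ _ nz; exists x; apply: imply_to_and.
Qed.

Lemma jacobson0 : jacobson (0 : R).
Proof. by move=> M [[[M0 _] _] _]. Qed.

Lemma jacobsonB x y : jacobson x -> jacobson y -> jacobson (x - y).
Proof.
by move=> Jx Jy M maxM; have [[[_ MB] _] _] := maxM; apply: MB; [apply: Jx | apply: Jy].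
Qed.

Lemma jacobsonN x : jacobson x -> jacobson (- x).
Proof. by move=> Jx; rewrite -sub0r; apply: jacobsonB => //; apply: jacobson0. Qed.

Lemma jacobsonMr x r : jacobson x -> jacobson (x * r).
Proof. by move=> Jx M maxM; have [[_ MM] _] := maxM; apply: MM; apply: Jx. Qed.

Lemma rinv_1D_jacobson j : jacobson j -> exists w, (1 + j) * w = 1.
Proof.
move=> Jj; apply: NNPP => no_rinv.
have [|M [maxM sub]] := maximal_right_ideal_ext (right_ideal_rprincipal (1 + j)).
  by move=> [w /esym jw1]; apply: no_rinv; exists w.
have [[[_ MB] _] [M1 _]] := maxM.
by apply: M1; have := MB _ _ (sub _ (rprincipal_id _)) (Jj M maxM); rewrite addrK.
Qed.

Lemma unit_1D_jacobson j : jacobson j -> is_unit (1 + j).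
Proof.
move=> Jj; have [w jw1] := rinv_1D_jacobson Jj.
have Ew : w = 1 + - (j * w).
  by apply/eqP; rewrite -subr_eq opprK -{1}[w]mul1r -mulrDl jw1.
have [w' ww'1] := rinv_1D_jacobson (jacobsonN (jacobsonMr w Jj)).
rewrite -Ew in ww'1.
have Ew' : 1 + j = w'.
  by transitivity ((1 + j) * (w * w')); [rewrite ww'1 mulr1 | rewrite mulrA jw1 mul1r].
by exists w; split => //; rewrite Ew'.
Qed.

Lemma jacobson_fixed_eq0 s j : jacobson j -> s * j = s -> s = 0.
Proof.
move=> Jj sj; have [v [jv1 _]] := unit_1D_jacobson (jacobsonN Jj).
by rewrite -[s]mulr1 -jv1 mulrA mulrDr mulr1 mulrN sj subrr mul0r.
Qed.

Lemma minimal_right_ideal_mul_jacobson M m j :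
  minimal_right_ideal M -> M m -> jacobson j -> m * j = 0.
Proof.
move=> [[_ MM] [_ Mmin]] Mm Jj.
pose mJ z := exists j, jacobson j /\ z = m * j.
have idmJ : right_ideal mJ.
  split; first split.
  - by exists 0; rewrite mulr0; split => //; apply: jacobson0.
  - move=> _ _ [j1 [J1 ->]] [j2 [J2 ->]].
    by exists (j1 - j2); rewrite mulrBr; split => //; apply: jacobsonB.
  - by move=> _ r [j1 [J1 ->]]; exists (j1 * r); rewrite mulrA; split => //; apply: jacobsonMr.
have [|mJ0|mJM] := Mmin mJ idmJ; first by move=> _ [j1 [_ ->]]; apply: MM.
  by apply: mJ0; exists j.
have [j1 [J1 Em]] := (proj2 (mJM m)) Mm.
by rewrite (jacobson_fixed_eq0 J1 (esym Em)) mul0r.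
Qed.

Lemma soc_RR_mul_jacobson s j : soc_RR R s -> jacobson j -> s * j = 0.
Proof.
move=> [l [minl ->]] Jj; rewrite mulr_suml big1_seq // => a /andP [_ al].
by have [M [minM Ma]] := minl a al; apply: minimal_right_ideal_mul_jacobson minM Ma Jj.
Qed.

Lemma sum_of_family_mem (F : (R -> Prop) -> Prop) N s : F N -> N s -> sum_of_family F s.
Proof.
move=> FN Ns; exists [:: s]; split; last by rewrite big_seq1.
by move=> a; rewrite inE => /eqP ->; exists N.
Qed.

Lemma central_mulr_comm_mod_jacobson c w : comm_mod_jacobson R -> central c ->
  (forall j, jacobson j -> c * j = 0) -> central (c * w).
Proof.
move=> comm Cc cJ r; have /eqP := cJ _ (comm w r).
by rewrite mulrBr subr_eq0 => /eqP cwr; rewrite -mulrA cwr !mulrA Cc.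
Qed.

Lemma centrally_essential_minimal_central M : centrally_essential R ->
  minimal_right_ideal M -> exists c, central c /\ M c /\ c <> 0.
Proof.
move=> ce minM; have [[_ MM] [/not_zero_setP [m [Mm m0]] _]] := minM.
have [x [y [_ [Cy [_ [y0 mxy]]]]]] := ce m m0.
by exists y; split => //; split => //; rewrite -mxy; apply: MM.
Qed.

End Jacobson.

Section Artinian.
Variable R : nzRingType.
Implicit Types (I K M : R -> Prop) (a d x : R).

Lemma artinian_minimal_elt (F : (R -> Prop) -> Prop) : right_artinian R ->
  (forall I, F I -> right_ideal I) -> (exists I, F I) ->
  exists I, F I /\ forall K, F K -> Defs.subset K I -> Defs.subset I K.
Proof.
move=> art Fideal [I0 FI0]; apply: NNPP => no_min.
have step (I : {I | F I}) : {K : {I | F I} |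
    Defs.subset (sval K) (sval I) /\ ~ Defs.subset (sval I) (sval K)}.
  apply: constructive_indefinite_description; case: I => I FI /=.
  apply: NNPP => no_smaller; apply: no_min; exists I; split => // K FK KI.
  by apply: NNPP => IK; apply: no_smaller; exists (exist _ K FK).
pose chain n := iter n (fun sI => sval (step sI)) (exist _ I0 FI0).
have [N stable] := art (fun n => sval (chain n)) (fun n => Fideal _ (svalP (chain n)))
  (fun n => proj1 (svalP (step (chain n)))).
by apply: (proj2 (svalP (step (chain N)))) => x; apply: (proj2 (stable N.+1 (leqnSn N) x)).
Qed.

Lemma exists_minimal_right_ideal : right_artinian R -> exists M, minimal_right_ideal M.
Proof.
move=> art.
have nonzero_top : right_ideal (fun _ : R => True) /\ ~ zero_set (fun _ : R => True).
  by do !split => // top0; move/eqP: (top0 1 I); rewrite oner_eq0.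
have [M [[idM M0] Mmin]] := artinian_minimal_elt (F := fun I => right_ideal I /\ ~ zero_set I)
  art (fun I => @proj1 _ _) (ex_intro _ _ nonzero_top).
exists M; split => //; split => // K idK KM.
have [|K0] := classic (zero_set K); [by left | right].
by move=> x; split; [apply: KM | apply: (Mmin K)].
Qed.

Lemma artinian_central_multiple a : right_artinian R -> a <> 0 ->
  exists x, central x /\ a * x <> 0 /\
    forall d, central d -> jacobson d -> a * x * d = 0.
Proof.
move=> art a0.
pose F I := exists x, central x /\ a * x <> 0 /\ I = rprincipal (a * x).
have Fideal I : F I -> right_ideal I by move=> [x [_ [_ ->]]]; apply: right_ideal_rprincipal.
have F1 : F (rprincipal (a * 1)) by exists 1; split; [exact: central1 | rewrite mulr1].
have [_ [[x [Cx [ax0 ->]]] axmin]] := artinian_minimal_elt art Fideal (ex_intro _ _ F1).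
exists x; split => //; split => // d Cd Jd; apply: NNPP => axd0.
have Faxd : F (rprincipal (a * x * d)).
  by exists (x * d); split; [exact: centralM | rewrite mulrA].
have [r axdr] := axmin _ Faxd (@rprincipalM _ (a * x) d) _ (rprincipal_id (a * x)).
apply: ax0; apply: (jacobson_fixed_eq0 (jacobsonMr r Jd)).
by rewrite mulrA -axdr.
Qed.

End Artinian.

Section LocalRing.
Variable R : nzRingType.
Hypothesis local : local_ring R.
Implicit Types (c d j r s u v w x y z : R).

Lemma unit_not_jacobson x : ~ jacobson x -> is_unit x.
Proof.
have [_ inv_modJ] := local.
move=> nJx; have [y [Jxy Jyx]] := inv_modJ x nJx.
have [v1 [xyv1 _]] := unit_1D_jacobson Jxy; rewrite addrC subrK in xyv1.
have [v2 [_ v2yx]] := unit_1D_jacobson Jyx; rewrite addrC subrK in v2yx.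
have E : v2 * y = y * v1.
  by rewrite -[v2 * y]mulr1 -xyv1 !mulrA -(mulrA v2) v2yx mul1r.
by exists (y * v1); split; [rewrite mulrA | rewrite -E -mulrA].
Qed.

Lemma jacobsonMl x u : jacobson u -> jacobson (x * u).
Proof.
move=> Ju; apply: NNPP => /unit_not_jacobson [v [_ vxu1]].
have wu1 : v * x * u = 1 by rewrite -mulrA.
have e0 : u * (v * x) = 0.
  apply: (jacobson_fixed_eq0 (jacobsonMr (v * x) Ju)).
  by rewrite mulrA -(mulrA u) wu1 mulr1.
have u0 : u = 0 by rewrite -[u]mulr1 -wu1 mulrA e0 mul0r.
by move/eqP: wu1; rewrite u0 mulr0 eq_sym oner_eq0.
Qed.

Lemma jacobson_of_mul_eq0 y z : y <> 0 -> y * z = 0 -> jacobson z.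
Proof.
move=> y0 yz0; apply: NNPP => /unit_not_jacobson [z' [zz' _]].
by apply: y0; rewrite -[y]mulr1 -zz' mulrA yz0 mul0r.
Qed.

Lemma unit_of_annihilator s r :
  (forall j, jacobson j -> s * j = 0) -> s * r <> 0 -> is_unit r.
Proof. by move=> sJ sr0; apply: unit_not_jacobson => /sJ. Qed.

Lemma minimal_rprincipal s : s <> 0 ->
  (forall j, jacobson j -> s * j = 0) -> minimal_right_ideal (rprincipal s).
Proof.
move=> s0 sJ; split; first exact: right_ideal_rprincipal.
split; first by move=> s_0; apply/s0/s_0/rprincipal_id.
move=> K [_ KM] Ks; have [|K0] := classic (zero_set K); [by left | right].
have [z [Kz z0]] := not_zero_setP K0; have [r zsr] := Ks _ Kz.
have [r' [rr' _]] : is_unit r by apply: (unit_of_annihilator sJ); rewrite -zsr.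
have Ks' : K s by rewrite -[s]mulr1 -rr' mulrA -zsr; apply: KM.
by move=> x; split; [apply: Ks | move=> [r1 ->]; apply: KM].
Qed.

Lemma simple_cprincipal s : s <> 0 ->
  (forall d, central d -> jacobson d -> s * d = 0) -> simple_C_submodule (cprincipal s).
Proof.
move=> s0 sJ; split.
  split; first split.
  - by exists 0; split; [exact: central0 | rewrite mulr0].
  - move=> _ _ [c1 [C1 ->]] [c2 [C2 ->]].
    by exists (c1 - c2); split; [apply: centralB | rewrite mulrBr].
  - by move=> _ c Cc [c1 [C1 ->]]; exists (c1 * c); split; [apply: centralM | rewrite mulrA].
split; first by move=> s_0; apply/s0/s_0/cprincipal_id.
move=> K [_ KM] Ks; have [|K0] := classic (zero_set K); [by left | right].
have [z [Kz z0]] := not_zero_setP K0; have [c [Cc zsc]] := Ks _ Kz.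
have [c' [cc' c'c]] : is_unit c.
  by apply: unit_not_jacobson => Jc; apply: z0; rewrite zsc sJ.
have Ks' : K s.
  by rewrite -[s]mulr1 -cc' mulrA -zsc; exact: KM _ _ (central_inv Cc cc' c'c) Kz.
by move=> x; split; [apply: Ks | move=> [c1 [C1 ->]]; apply: KM].
Qed.

Lemma soc_RC_of_central_annihilator s : s <> 0 ->
  (forall d, central d -> jacobson d -> s * d = 0) -> soc_RC R s.
Proof.
by move=> s0 sJ; apply: sum_of_family_mem (simple_cprincipal s0 sJ) (cprincipal_id s).
Qed.

Lemma centrally_essential_central_mulr y w : centrally_essential R ->
  (forall j, jacobson j -> y * j = 0) -> central (y * w).
Proof.
move=> ce yJ; have [->|yw0] := classic (y * w = 0); first exact: central0.
have [u [v [Cu [Cv [_ [v0 ywuv]]]]]] := ce _ yw0.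
have [u' [uu' u'u]] : is_unit u.
  apply: (unit_of_annihilator (s := y * w)); last by rewrite ywuv.
  by move=> j Jj; rewrite -mulrA yJ //; apply: jacobsonMl.
have -> : y * w = v * u' by rewrite -ywuv -mulrA uu' mulr1.
exact: centralM Cv (central_inv Cu uu' u'u).
Qed.

Lemma comm_mod_jacobson_of_central_mulr y : y <> 0 -> central y ->
  (forall w, central (y * w)) -> comm_mod_jacobson R.
Proof.
move=> y0 Cy Cyw a b; apply: (jacobson_of_mul_eq0 y0).
by rewrite mulrBr !mulrA (Cyw a b) mulrA -(Cy b) subrr.
Qed.

Lemma central_of_minimal_rprincipal s : comm_mod_jacobson R -> s <> 0 ->
  (forall j, jacobson j -> s * j = 0) ->
  (exists c, central c /\ rprincipal s c /\ c <> 0) -> central s.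
Proof.
move=> comm s0 sJ [c [Cc [[r csr] c0]]].
have [r' [rr' _]] : is_unit r by apply: (unit_of_annihilator sJ); rewrite -csr.
have cJ j : jacobson j -> c * j = 0.
  by move=> Jj; rewrite csr -mulrA sJ //; apply: jacobsonMl.
have -> : s = c * r' by rewrite csr -mulrA rr' mulr1.
exact: central_mulr_comm_mod_jacobson.
Qed.

End LocalRing.

Theorem proposition3p4 (R : nzRingType) :
  local_ring R -> right_artinian R -> ~ division_ring R ->
  (centrally_essential R ->
     comm_mod_jacobson R /\
     (forall M : R -> Prop, minimal_right_ideal M ->
        exists c : R, central c /\ M c /\ c <> 0))
  /\
  (comm_mod_jacobson R ->
   same_set (soc_RC R) (soc_RR R) ->
   (forall M : R -> Prop, minimal_right_ideal M ->
        exists c : R, central c /\ M c /\ c <> 0) ->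
   centrally_essential R).
Proof.
move=> local art _; split.
  move=> ce; have [M minM] := exists_minimal_right_ideal art.
  have [y [Cy [My y0]]] := centrally_essential_minimal_central ce minM.
  have yJ j : jacobson j -> y * j = 0 by apply: minimal_right_ideal_mul_jacobson minM My.
  split; last by move=> N; apply: centrally_essential_minimal_central.
  apply: (comm_mod_jacobson_of_central_mulr local y0 Cy) => w.
  exact: centrally_essential_central_mulr.
move=> comm soc meets a a0.
have [x [Cx [ax0 axCJ]]] := artinian_central_multiple art a0.
have axJ j : jacobson j -> a * x * j = 0.
  by apply: soc_RR_mul_jacobson; apply/soc; apply: soc_RC_of_central_annihilator.
have Cax := central_of_minimal_rprincipal local comm ax0 axJ
  (meets _ (minimal_rprincipal local ax0 axJ)).
exists x, (a * x); do 3!split => //.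
by move=> x0; apply: ax0; rewrite x0 mulr0.
Qed.
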